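(* Let $m\ge 2$ be an integer, let $P_n^k\in\mathbb{R}^{m}$ be any fixed vector (linearization point), and let $i\in\{1,\dots,m\}$. For $P_n\in\mathbb{R}^m$ define the softmax component $R_{n,i}(P_n)=\exp(P_{n,i})/\sum_{j=1}^{m}\exp(P_{n,j})$ and $\mathrm{LSE}(P_n)=\ln\bigl(\sum_{j=1}^{m}\exp(P_{n,j})\bigr)$, and let $g^k=\exp(P_n^k)/\sum_{j=1}^m\exp(P^k_{n,j})\in\mathbb{R}^m$ (componentwise exponential). Define $$\overline{R}_{n,i}(P_n)=\exp\Bigl\{P_{n,i}-\mathrm{LSE}(P_n^k)-(g^k)^{\top}(P_n-P_n^k)\Bigr\},$$ $$\underline{R}_{n,i}(P_n)=1-\sum_{j\in\{1,\dots,m\}\setminus\{i\}}\exp(P_{n,j})\exp\Bigl\{-\mathrm{LSE}(P_n^k)-(g^k)^{\top}(P_n-P_n^k)\Bigr\}.$$ Let $\underline{r}_{n,i},\overline{r}_{n,i}\in\mathbb{R}$. Then the constraints $$\underline{r}_{n,i}\le \underline{R}_{n,i}(P_n),\qquad \overline{R}_{n,i}(P_n)\le \overline{r}_{n,i}$$ define a convex set of $P_n\in\mathbb{R}^m$; they are sufficient for $\underline{r}_{n,i}\le R_{n,i}(P_n)\le \overline{r}_{n,i}$; and they are necessary for $\underline{r}_{n,i}\le R_{n,i}(P_n^k)\le \overline{r}_{n,i}$, in the sense that if $\underline{r}_{n,i}\le R_{n,i}(P_n^k)\le \overline{r}_{n,i}$ then the constraints hold at $P_n=P_n^k$.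
   Context: Here $P_n$ is the $n$th row of a matrix $P\in\mathbb{R}^{m\times m}$ to which softmax is applied row-wise (in the paper $m=w+p$), and $P_n^k$ is the $n$th row of a linearization point $P^k$. *)

From HB Require Import structures.
From mathcomp Require Import all_boot all_order all_algebra.
From mathcomp Require Import all_classical all_reals all_analysis.
Set Implicit Arguments. Unset Strict Implicit. Unset Printing Implicit Defensive.
Import Order.TTheory GRing.Theory Num.Theory.
Local Open Scope ring_scope.

Section Softmax.
Context {R : realType} {m : nat}.

Definition softmax_comp (P : 'rV[R]_m) (i : 'I_m) : R :=
  expR (P 0 i) / \sum_(j < m) expR (P 0 j).

Definition LSE (P : 'rV[R]_m) : R := ln (\sum_(j < m) expR (P 0 j)).

Definition gk (Pk : 'rV[R]_m) : 'rV[R]_m :=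
  \row_(j < m) (expR (Pk 0 j) / \sum_(l < m) expR (Pk 0 l)).

Definition lin_term (Pk P : 'rV[R]_m) : R :=
  \sum_(j < m) gk Pk 0 j * (P 0 j - Pk 0 j).

Definition R_upper (Pk : 'rV[R]_m) (i : 'I_m) (P : 'rV[R]_m) : R :=
  expR (P 0 i - LSE Pk - lin_term Pk P).

Definition R_lower (Pk : 'rV[R]_m) (i : 'I_m) (P : 'rV[R]_m) : R :=
  1 - \sum_(j < m | j != i) expR (P 0 j) * expR (- LSE Pk - lin_term Pk P).

End Softmax.

From HB Require Import structures.
From mathcomp Require Import all_boot all_order all_algebra.
From mathcomp Require Import all_classical all_reals all_analysis.
From mathcomp Require Import ring.
Import Order.TTheory GRing.Theory Num.Theory.
Local Open Scope ring_scope.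
Local Open Scope convex_scope.

(* With E(P) := exp(-LSE(P^k) - g^k.(P - P^k)), the upper bound is
   R_upper_j(P) = exp(P_j) E(P) and the lower bound is
   R_lower_i = 1 - sum_(j <> i) R_upper_j.  Convexity of LSE gives the tangent
   inequality LSE(P) >= LSE(P^k) + g^k.(P - P^k) (g^k is the gradient of LSE at
   P^k), i.e. softmax_j(P) <= R_upper_j(P), with equality at P = P^k.  Since
   the softmax components sum to 1, summing over j <> i yields
   R_lower_i(P) <= softmax_i(P).  Each R_upper_j is exp of an affine function,
   hence convex, so both constraints are sublevel sets of convex functions. *)

Section convex_lmod.
Context {R : realType} {E : lmodType R}.
Implicit Types (A B : set (convex_lmodType E)) (f : convex_lmodType E -> R^o).

Lemma convex_setI A B : convex_set A -> convex_set B -> convex_set (A `&` B).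
Proof.
move=> cA cB x y t; rewrite !in_setE => -[xA xB] [yA yB].
by split; apply/set_mem; [apply: cA | apply: cB]; rewrite inE.
Qed.

Lemma convex_set_le f (c : R) :
  convex_function setT f -> convex_set [set x | f x <= c]%classic.
Proof.
move=> cf x y t; rewrite !in_setE /= => fx fy.
apply: (le_trans (cf t x y _ _)); rewrite ?in_setT // -(convmm t (c : R^o)) !convRE.
by rewrite lerD // ler_wpM2l // unstable.onem_ge0.
Qed.

Lemma convex_function_sum (I : Type) (r : seq I) (P : pred I)
    (F : I -> convex_lmodType E -> R^o) :
  (forall j, P j -> convex_function setT (F j)) ->
  convex_function setT (fun x => \sum_(j <- r | P j) F j x : R^o).
Proof.
move=> cF t x y xT yT; rewrite convRE !mulr_sumr -big_split /=.
by apply: ler_sum => j Pj; rewrite -convRE; exact: cF.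
Qed.

Lemma convex_expR_comp f :
  (forall t x y, f (x <| t |> y) = f x <| t |> f y) ->
  convex_function setT (fun x => expR (f x) : R^o).
Proof. by move=> af t x y _ _; rewrite af; exact: convex_expR. Qed.

End convex_lmod.

Lemma expR_sum_wmean_le (R : realType) (I : Type) (r : seq I) (P : pred I)
    (w x : I -> R) :
  (forall j, P j -> 0 <= w j) -> \sum_(j <- r | P j) w j = 1 ->
  expR (\sum_(j <- r | P j) w j * x j) <= \sum_(j <- r | P j) w j * expR (x j).
Proof.
move=> w_ge0 w_sum1; set L := \sum_(j <- r | P j) w j * x j.
have shift j : w j * expR (x j) = expR L * (w j * expR (x j - L)).
  by rewrite mulrCA -expRD addrC subrK.
rewrite (eq_bigr _ (fun j _ => shift j)) -mulr_sumr ler_pMr ?expR_gt0 //.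
apply: (le_trans _ (ler_sum _ (fun j Pj => ler_wpM2l (w_ge0 j Pj) (expR_ge1Dx _)))).
under eq_bigr do rewrite mulrDr mulr1 mulrBr.
by rewrite big_split sumrB /= -/L -mulr_suml w_sum1 mul1r subrr addr0.
Qed.

Section softmax.
Context {R : realType} {m : nat}.
Implicit Types (Pk P : 'rV[R]_m) (i j : 'I_m).

Lemma R_lowerE Pk i P :
  R_lower Pk i P = 1 - \sum_(j < m | j != i) R_upper Pk j P.
Proof.
congr (1 - _); apply: eq_bigr => j _.
by rewrite /R_upper -expRD; congr expR; ring.
Qed.

Lemma R_lower_geE Pk i P r :
  (r <= R_lower Pk i P) = (\sum_(j < m | j != i) R_upper Pk j P <= 1 - r).
Proof. by rewrite R_lowerE lerBrDl addrC -lerBrDl. Qed.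

Lemma lin_term_conv Pk (x y : convex_lmodType 'rV[R]_m) t :
  lin_term Pk (x <| t |> y) = (lin_term Pk x : R^o) <| t |> lin_term Pk y.
Proof.
rewrite convRE /lin_term !mulr_sumr -big_split /=.
by apply: eq_bigr => j _; rewrite /conv /= !mxE /unstable.onem; ring.
Qed.

Lemma convex_R_upper Pk j : convex_function setT (R_upper Pk j).
Proof.
apply: convex_expR_comp => t x y.
by rewrite lin_term_conv !convRE /conv /= !mxE /unstable.onem; ring.
Qed.

Hypothesis m_gt0 : (0 < m)%N.

Lemma sum_expR_gt0 P : 0 < \sum_(j < m) expR (P 0 j).
Proof.
rewrite (bigD1 (Ordinal m_gt0)) //= ltr_pwDl ?expR_gt0 //.
by rewrite sumr_ge0 // => j _; rewrite expR_ge0.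
Qed.

Lemma expR_LSE P : expR (LSE P) = \sum_(j < m) expR (P 0 j).
Proof. by rewrite /LSE lnK // posrE sum_expR_gt0. Qed.

Lemma softmax_compE P j : softmax_comp P j = expR (P 0 j - LSE P).
Proof. by rewrite expRB expR_LSE. Qed.

Lemma sum_softmax_comp P : \sum_(j < m) softmax_comp P j = 1.
Proof. by rewrite -mulr_suml divff // gt_eqF ?sum_expR_gt0. Qed.

Lemma softmax_comp_compl P i :
  softmax_comp P i = 1 - \sum_(j < m | j != i) softmax_comp P j.
Proof. by rewrite -(sum_softmax_comp P) (bigD1 i) //= addrK. Qed.

Lemma LSE_tangent Pk P : LSE Pk + lin_term Pk P <= LSE P.
Proof.
have Sk_gt0 := sum_expR_gt0 Pk.
have gk_ge0 j : 0 <= gk Pk 0 j by rewrite mxE divr_ge0 ?expR_ge0 ?ltW.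
have gk_sum1 : \sum_(j < m) gk Pk 0 j = 1.
  by under eq_bigr do rewrite mxE; exact: sum_softmax_comp.
have gk_scale j : (\sum_(l < m) expR (Pk 0 l)) * (gk Pk 0 j * expR (P 0 j - Pk 0 j))
    = expR (P 0 j).
  by rewrite mxE mulrA mulrCA divff ?gt_eqF // mulr1 -expRD addrC subrK.
rewrite -ler_expR expRD !expR_LSE -(eq_bigr _ (fun j _ => gk_scale j)).
by rewrite -mulr_sumr ler_pM2l // expR_sum_wmean_le.
Qed.

Lemma softmax_comp_le_R_upper Pk P j : softmax_comp P j <= R_upper Pk j P.
Proof.
by rewrite softmax_compE ler_expR -addrA lerD2l -opprD lerN2 LSE_tangent.
Qed.

Lemma R_upper_self Pk j : R_upper Pk j Pk = softmax_comp Pk j.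
Proof.
rewrite softmax_compE /R_upper /lin_term big1 ?subr0 // => l _.
by rewrite subrr mulr0.
Qed.

End softmax.

Theorem theorem2 (R : realType) (m : nat) (hm : (2 <= m)%N)
    (Pk : 'rV[R]_m) (i : 'I_m) (r_lo r_up : R) :
  convex_set
    ([set P : convex_lmodType 'rV[R]_m |
       r_lo <= R_lower Pk i P /\ R_upper Pk i P <= r_up])%classic
  /\ (forall P : 'rV[R]_m,
        r_lo <= R_lower Pk i P -> R_upper Pk i P <= r_up ->
        r_lo <= softmax_comp P i <= r_up)
  /\ (r_lo <= softmax_comp Pk i <= r_up ->
        r_lo <= R_lower Pk i Pk /\ R_upper Pk i Pk <= r_up).
Proof.
have m_gt0 : (0 < m)%N := ltnW hm.
split; [|split].
- have -> : [set P : convex_lmodType 'rV[R]_m |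
       r_lo <= R_lower Pk i P /\ R_upper Pk i P <= r_up]%classic =
      ([set P | \sum_(j < m | j != i) R_upper Pk j P <= 1 - r_lo] `&`
       [set P | R_upper Pk i P <= r_up])%classic.
    by apply/seteqP; split=> P /=; rewrite R_lower_geE.
  apply: convex_setI; apply: convex_set_le; last exact: convex_R_upper.
  by apply: convex_function_sum => j _; exact: convex_R_upper.
- move=> P lo up; apply/andP; split; last first.
    exact: le_trans (softmax_comp_le_R_upper m_gt0 Pk P i) up.
  apply: (le_trans lo); rewrite R_lowerE softmax_comp_compl // lerD2l lerN2.
  by apply: ler_sum => j _; exact: softmax_comp_le_R_upper.
- rewrite R_lowerE (R_upper_self m_gt0).
  under eq_bigr do rewrite (R_upper_self m_gt0).
  by rewrite -softmax_comp_compl // => /andP.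
Qed.
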